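(* Let $p$ be a prime, $q=p^l$, $m\ge1$, $n=2m$. Let $r=\rho(q-1)$ with $0\leqslant\rho\leqslant n-1$ and $\rho=2\rho'$ even, and let $I\subseteq M_r$ with $0\in I$. Let $V$ be an $\mathbb{F}_{q^2}$-subspace of $\mathbb{F}_{q^n}$ of dimension $m-\rho'$ over $\mathbb{F}_{q^2}$ and $\lambda\in\mathbb{F}_q^*$. Then the vector $x=(x_g)_{g\in\mathbb{F}_{q^n}^*}$ with $x_g=\lambda$ for $g\in V\setminus\{0\}$ and $x_g=0$ otherwise belongs to $\mathcal{C}_q(r,I,n)^*$.
   Context: Let $N=q^n-1$ and $\alpha$ a primitive element of $\mathbb{F}_{q^n}$. Every integer $0\le u\le q^n-1$ is written $u=\sum_{i=0}^{n-1}u_iq^i$, $u_i\in\{0,\dots,q-1\}$; $\mathrm{wt}_q(u)=\sum u_i$, $O(u)=\sum_{i\text{ odd}}u_i$, $E(u)=\sum_{i\text{ even}}u_i$. For $-1\le r<n(q-1)$, $Z_r=\{\alpha^u\mid 0<u\le q^n-1,\ \mathrm{wt}_q(u)\le n(q-1)-r-1\}$. For $0\le r\le n(q-1)$ and integer $k\ge0$, $\Theta^{(r)}_k=\{\alpha^u\mid 0\le u\le q^n-1,\ \mathrm{wt}_q(u)=n(q-1)-r,\ |O(u)-E(u)|=k\}$. $M_r$ is the set of even (resp. odd) integers $k\in[0,m(q-1)]$ when $r$ is even (resp. odd). For $I\subseteq M_r$: $\overline I=M_r\setminus I$, $Z_{r,I}=Z_r\cup\bigcup_{k\in\overline I}\Theta^{(r)}_k$.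 $\mathcal{C}_q(r,I,n)^*$ is the cyclic code of length $N$ over $\mathbb{F}_q$ with coordinates indexed by $\mathbb{F}_{q^n}^*$ consisting of all $x=(x_g)$ with $\sum_g x_g g^{u}=0$ for every $u\in[1,N]$ with $\alpha^u\in Z_{r,I}$. *)

From mathcomp Require Import all_boot all_order all_algebra all_field.
Set Implicit Arguments. Unset Strict Implicit. Unset Printing Implicit Defensive.
Import GRing.Theory.
Local Open Scope ring_scope.

Definition qdigit (q u i : nat) : nat := ((u %/ q ^ i) %% q)%N.
Definition wtq (q n u : nat) : nat := (\sum_(i < n) qdigit q u i)%N.
Definition Oq (q n u : nat) : nat := (\sum_(i < n | odd i) qdigit q u i)%N.
Definition Eq (q n u : nat) : nat := (\sum_(i < n | ~~ odd i) qdigit q u i)%N.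
Definition absdiff (a b : nat) : nat := ((a - b) + (b - a))%N.

Section Code.
Variables (L : finFieldType) (q n m : nat) (alpha : L).

Definition inZ (r : nat) (y : L) : bool :=
  [exists u : 'I_(q ^ n).+1,
     [&& (0 < u)%N, (u <= q ^ n - 1)%N,
         (wtq q n u <= n * (q - 1) - r - 1)%N & alpha ^+ u == y]].

Definition inTheta (r k : nat) (y : L) : bool :=
  [exists u : 'I_(q ^ n).+1,
     [&& (u <= q ^ n - 1)%N, wtq q n u == (n * (q - 1) - r)%N,
         absdiff (Oq q n u) (Eq q n u) == k & alpha ^+ u == y]].

Definition Mr (r : nat) : pred nat :=
  fun k => (k <= m * (q - 1))%N && (odd k == odd r).

Definition inZrI (r : nat) (I : pred nat) (y : L) : bool :=
  inZ r y ||
  [exists k : 'I_(m * (q - 1)).+1,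
     [&& Mr r (val k), (val k) \notin I & inTheta r (val k) y]].

(* C_q(r,I,n)^* : words (x_g)_{g in F_{q^n}^*} over F_q (x g^q = x g)
   with sum_{g != 0} x_g g^u = 0 for all u in [1,N] with alpha^u in Z_{r,I}.
   Coordinates are indexed by nonzero g; the value x 0 is irrelevant. *)
Definition in_code (r : nat) (I : pred nat) (x : L -> L) : Prop :=
  (forall g : L, g != 0 -> x g ^+ q = x g) /\
  (forall u : nat, (1 <= u <= q ^ n - 1)%N -> inZrI r I (alpha ^+ u) ->
     \sum_(g : L | g != 0) x g * g ^+ u = 0).

End Code.

Definition Fq2_subspace (L : finFieldType) (q : nat) (V : {set L}) : Prop :=
  [/\ 0 \in V,
      (forall v w, v \in V -> w \in V -> v + w \in V) &
      (forall c v, c ^+ (q ^ 2) = c -> v \in V -> c * v \in V)].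

(* The word is lambda times the indicator of V minus 0, so everything reduces to
   sum_{g in V} g^u = 0 for every u with alpha^u in Z_{r,I}, where V is an
   F_{q^2}-space of dimension d = m - rho'.  Grouping the q-adic digits of u in
   pairs writes g^u as a product of E(u) + q O(u) maps g |-> g^{q^{2j}}, which are
   F_{q^2}-linear, and g^{uq} = (g^u)^q as a product of q E(u) + O(u) of them.
   Along a basis of V such a product expands into monomials in the coordinates; if
   fewer than d(q^2-1) factors occur, every monomial has a coordinate of degree
   below q^2-1 and dies under sum_{c in F_{q^2}} c^k = 0 (k < q^2-1).  The two
   counts add up to (q+1) wt_q(u), and the weight condition defining Z_{r,I}
   (wt_q(u) < 2d(q-1), or equality with O(u) <> E(u), since 0 is in I) forces the
   smaller one below d(q^2-1). *)

From mathcomp Require Import all_boot all_order all_algebra all_field.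
From mathcomp Require Import ring zify.

Set Implicit Arguments.
Unset Strict Implicit.
Unset Printing Implicit Defensive.
Import GRing.Theory.
Local Open Scope ring_scope.

Definition frob_fixed (L : finFieldType) (Q : nat) : {set L} := [set c | c ^+ Q == c].

Section FrobeniusFixedField.
Variables (L : finFieldType) (Q : nat) (beta : L).
Hypotheses (QcharL : [pchar L].-nat Q) (beta_prim : Q.-1.-primitive_root beta).

Local Notation K := (frob_fixed L Q).

Lemma prim_order_gt1 : (1 < Q)%N.
Proof. by have := prim_order_gt0 beta_prim; case: Q => [|[]]. Qed.

Lemma natr_pchar_nat : Q%:R = 0 :> L.
Proof.
apply/eqP; apply: contraT; rewrite -pcharf'_nat => /(pnat_1 QcharL) Q1.
by have := prim_order_gt1; rewrite Q1.
Qed.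

Lemma frob_fixed0 : 0 \in K.
Proof. by rewrite inE expr0n gtn_eqF // ltnW // prim_order_gt1. Qed.

Lemma frob_fixedB c d : c \in K -> d \in K -> c - d \in K.
Proof. by rewrite !inE exprDn_pchar // exprNn_pchar // => /eqP-> /eqP->. Qed.

Lemma frob_fixedM c d : c \in K -> d \in K -> c * d \in K.
Proof. by rewrite !inE exprMn => /eqP-> /eqP->. Qed.

Lemma frob_fixedV c : c \in K -> c^-1 \in K.
Proof. by rewrite !inE exprVn => /eqP->. Qed.

Lemma prim_root_frob_fixed : beta \in K.
Proof.
rewrite inE -{1}(prednK (ltnW prim_order_gt1)) exprS.
by rewrite prim_expr_order // mulr1.
Qed.

Lemma prim_root_neq0 : beta != 0.
Proof.
apply/eqP => beta0; have := prim_expr_order beta_prim.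
rewrite beta0 expr0n gtn_eqF ?(prim_order_gt0 beta_prim) // => /eqP.
by rewrite eq_sym oner_eq0.
Qed.

Lemma frob_fixed_prim_exp : K = 0 |: [set beta ^+ i | i : 'I_Q.-1].
Proof.
apply/setP => c; rewrite in_setU1; have [->|c0] := eqVneq c 0.
  exact: frob_fixed0.
rewrite inE /=; apply/eqP/imsetP => [cQ|[i _ ->]]; last first.
  by have := prim_root_frob_fixed; rewrite inE exprAC => /eqP->.
have /(prim_rootP beta_prim)[i ->] : c ^+ Q.-1 = 1.
  by apply: (mulIf c0); rewrite mul1r -exprSr prednK // ltnW // prim_order_gt1.
by exists i.
Qed.

Lemma card_frob_fixed : #|K| = Q.
Proof.
rewrite frob_fixed_prim_exp cardsU1 card_imset ?card_ord.
  have /negPf-> : 0 \notin [set beta ^+ i | i : 'I_Q.-1].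
    apply/imsetP => -[i _ /esym/eqP].
    by rewrite expf_eq0 (negPf prim_root_neq0) andbF.
  by rewrite /= add1n prednK // ltnW // prim_order_gt1.
move=> i j /eqP; rewrite (eq_prim_root_expr beta_prim) !modn_small //.
by move/eqP/val_inj.
Qed.

Lemma sum_frob_fixed_expr k : (k < Q.-1)%N -> \sum_(c in K) c ^+ k = 0.
Proof.
case: k => [_|k ltkQ].
  by rewrite (eq_bigr (fun=> 1)) ?sumr_const ?card_frob_fixed ?natr_pchar_nat.
set S := \sum_(c in K) _.
have mul_betaK c : (beta * c \in K) = (c \in K).
  have := prim_root_frob_fixed; rewrite !inE exprMn => /eqP->.
  by rewrite (inj_eq (mulfI prim_root_neq0)).
have S_fixed : S = beta ^+ k.+1 * S.
  rewrite {1}/S (reindex_inj (mulfI prim_root_neq0)) /= mulr_sumr.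
  by apply: eq_big => [c|c _]; rewrite ?mul_betaK ?exprMn.
apply/eqP; move/eqP: S_fixed; rewrite -subr_eq0 -{1}[S]mul1r -mulrBl mulf_eq0.
rewrite subr_eq0 eq_sym -(prim_order_dvd beta_prim) => /orP[/dvdn_leq|] //.
by move/(_ isT); rewrite leqNgt ltkQ.
Qed.

Definition Qlinear (f : L -> L) :=
  {morph f : x y / x + y} /\ forall c x, c \in K -> f (c * x) = c * f x.

Definition Qsubspace (V : {set L}) :=
  [/\ 0 \in V, {in V &, forall v w, v + w \in V}
    & forall c v, c \in K -> v \in V -> c * v \in V].

Fixpoint Qspan (bs : seq L) : {set L} :=
  if bs is b :: bs' then [set c * b + w | c in K, w in Qspan bs'] else [set 0].

Fixpoint Qfree (bs : seq L) : bool :=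
  if bs is b :: bs' then (b \notin Qspan bs') && Qfree bs' else true.

Lemma QspanB bs x y : x \in Qspan bs -> y \in Qspan bs -> x - y \in Qspan bs.
Proof.
elim: bs x y => [|b bs IH] x y /=; first by rewrite !inE => /eqP-> /eqP->; rewrite subrr.
case/imset2P => c w Kc Sw -> /imset2P[c' w' Kc' Sw' ->].
apply/imset2P; exists (c - c') (w - w'); rewrite ?frob_fixedB ?IH //.
by rewrite mulrBl opprD addrACA.
Qed.

Lemma QspanZ bs c x : c \in K -> x \in Qspan bs -> c * x \in Qspan bs.
Proof.
elim: bs x => [|b bs IH] x Kc /=; first by rewrite !inE => /eqP->; rewrite mulr0.
case/imset2P => c' w Kc' Sw ->.
apply/imset2P; exists (c * c') (c * w); rewrite ?frob_fixedM ?IH //.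
by rewrite mulrDr mulrA.
Qed.

Lemma Qspan_cons_inj b bs : b \notin Qspan bs ->
  {in setX K (Qspan bs) &, injective (uncurry (fun c w => c * b + w))}.
Proof.
move=> nb [c w] [c' w'] /setXP[Kc Sw] /setXP[Kc' Sw'] /= eq_cw.
have [eq_c|neq_c] := eqVneq c c'; first by rewrite -eq_c in eq_cw *; rewrite (addrI _ eq_cw).
have cc'0 : c - c' != 0 by rewrite subr_eq0.
have Eb : (c - c') * b = w' - w by rewrite -[w'](addKr (c' * b)) -eq_cw; ring.
case/negP: nb; rewrite -(mulKf cc'0 b) Eb.
exact/QspanZ/QspanB/Sw/Sw'/frob_fixedV/frob_fixedB.
Qed.

Lemma card_Qspan bs : Qfree bs -> #|Qspan bs| = (Q ^ size bs)%N.
Proof.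
elim: bs => [|b bs IH] /=; first by rewrite cards1.
case/andP => nb free; rewrite curry_imset2X card_in_imset; last exact: Qspan_cons_inj.
by rewrite cardsX card_frob_fixed IH // expnS.
Qed.

Lemma sum_Qspan_cons b bs (F : L -> L) : b \notin Qspan bs ->
  \sum_(g in Qspan (b :: bs)) F g = \sum_(c in K) \sum_(w in Qspan bs) F (c * b + w).
Proof.
move=> nb; rewrite /= curry_imset2X big_imset /=; last exact: Qspan_cons_inj.
by rewrite pair_big_dep; apply: eq_big => -[c w] //=; rewrite in_setX.
Qed.

Lemma Qsubspace_basis V d : Qsubspace V -> #|V| = (Q ^ d)%N ->
  exists bs, [/\ Qfree bs, size bs = d & Qspan bs = V].
Proof.
case=> V0 VD VZ cardV.
suff /(_ d (leqnn d))[bs [free size_bs sub]] : forall k, (k <= d)%N ->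
    exists bs, [/\ Qfree bs, size bs = k & Qspan bs \subset V].
  exists bs; split=> //; apply/eqP.
  by rewrite eqEcard sub card_Qspan // size_bs cardV leqnn.
elim=> [|k IHk] ltkd; first by exists [::]; rewrite /= sub1set.
have [bs [free size_bs sub]] := IHk (ltnW ltkd).
have /subsetPn[v Vv nv] : ~~ (V \subset Qspan bs).
  apply: contraL ltkd => /subset_leq_card.
  by rewrite card_Qspan // size_bs cardV leq_exp2l ?prim_order_gt1 // leqNgt.
exists (v :: bs); split=> /=; [by rewrite nv | by rewrite size_bs |].
by apply/subsetP => _ /imset2P[c w Kc Sw ->]; apply/VD/(subsetP sub)/Sw/VZ.
Qed.

Section LinearFormProducts.
Variables (I : Type) (f : I -> L -> L).
Hypothesis f_Qlinear : forall i, Qlinear (f i).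

(* Induction on the forms [s] still evaluated at [c * b + w]: expanding one of
   them either moves it to [t] (evaluated at [w] only) or raises [k] by one. *)
Lemma sum_Qspan_cons_prod_eq0 b bs d :
    (forall t, (size t < d * Q.-1)%N -> \sum_(w in Qspan bs) \prod_(i <- t) f i w = 0) ->
  forall s t k, (size t + size s + k < d.+1 * Q.-1)%N ->
  \sum_(c in K) c ^+ k *
    \sum_(w in Qspan bs) (\prod_(i <- t) f i w * \prod_(i <- s) f i (c * b + w)) = 0.
Proof.
move=> IHbs; elim=> [|i s IHs] t k /= lt_size.
  under eq_bigr do under eq_bigr do rewrite big_nil mulr1.
  rewrite -mulr_suml; have [ltkQ|leQk] := ltnP k Q.-1.
    by rewrite sum_frob_fixed_expr // mul0r.
  by rewrite IHbs ?mulr0 //; move: lt_size; rewrite mulSn; lia.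
have [f_additive f_scalable] := f_Qlinear i.
transitivity (f i b * (\sum_(c in K) c ^+ k.+1 *
    \sum_(w in Qspan bs) (\prod_(j <- t) f j w * \prod_(j <- s) f j (c * b + w)))
  + \sum_(c in K) c ^+ k *
    \sum_(w in Qspan bs) (\prod_(j <- i :: t) f j w * \prod_(j <- s) f j (c * b + w))).
  rewrite mulr_sumr -big_split; apply: eq_bigr => c Kc.
  rewrite !mulr_sumr -big_split; apply: eq_bigr => w _.
  by rewrite !big_cons f_additive f_scalable //= exprS; ring.
by rewrite !IHs ?mulr0 ?addr0 //=; lia.
Qed.

Lemma sum_Qspan_prod_Qlinear_eq0 bs s : Qfree bs -> (size s < size bs * Q.-1)%N ->
  \sum_(g in Qspan bs) \prod_(i <- s) f i g = 0.
Proof.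
elim: bs s => [|b bs IH] s /=; first by rewrite mul0n.
case/andP => nb free lt_size; rewrite sum_Qspan_cons //.
have := @sum_Qspan_cons_prod_eq0 b _ _ (fun t => IH t free) s [::] 0.
rewrite add0n addn0 => /(_ lt_size) sum_eq0; rewrite -[RHS]sum_eq0.
by apply: eq_bigr => c _; rewrite mul1r; apply: eq_bigr => w _; rewrite big_nil mul1r.
Qed.

Lemma sum_Qsubspace_prod_Qlinear_eq0 V d s : Qsubspace V -> #|V| = (Q ^ d)%N ->
  (size s < d * Q.-1)%N -> \sum_(g in V) \prod_(i <- s) f i g = 0.
Proof.
move=> subV cardV; have [bs [free <- <-]] := Qsubspace_basis subV cardV.
exact: sum_Qspan_prod_Qlinear_eq0.
Qed.

End LinearFormProducts.

Lemma Qlinear_expr_frob j : Qlinear (fun g => g ^+ (Q ^ j)).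
Proof.
split=> [x y|c x]; first by rewrite exprDn_pchar // pnatX QcharL.
rewrite inE exprMn => /eqP Kc; congr (_ * _).
by elim: j => [|j IH]; rewrite ?expr1 // expnS exprM Kc.
Qed.

Lemma sum_Qsubspace_expr_eq0 (J : finType) (a e : J -> nat) V d :
    Qsubspace V -> #|V| = (Q ^ d)%N -> (\sum_(j : J) a j < d * Q.-1)%N ->
  \sum_(g in V) g ^+ (\sum_(j : J) a j * Q ^ e j) = 0.
Proof.
move=> subV cardV lt_deg.
pose s := flatten [seq nseq (a j) (e j) | j <- index_enum J].
have size_s : size s = (\sum_(j : J) a j)%N.
  by rewrite size_flatten sumnE big_map big_map; apply: eq_bigr => j _; rewrite size_nseq.
have := sum_Qsubspace_prod_Qlinear_eq0 Qlinear_expr_frob subV cardV (s := s).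
rewrite size_s => /(_ lt_deg) sum_eq0; rewrite -[RHS]sum_eq0; apply: eq_bigr => g _.
rewrite big_flatten big_map (big_morph _ (exprD g) (expr0 g)).
by apply: eq_bigr => j _; rewrite big_nseq iter_mulr_1 mulnC exprM.
Qed.

End FrobeniusFixedField.

Lemma qdigit_expansion q n u : (0 < q)%N -> (u < q ^ n)%N ->
  u = (\sum_(i < n) qdigit q u i * q ^ i)%N.
Proof.
move=> q_gt0; elim: n u => [|n IH] u lt_u.
  by rewrite big_ord0; move: lt_u; rewrite expn0; lia.
rewrite big_ord_recl /= {1}(divn_eq u q) (IH (u %/ q)%N) ?ltn_divLR -?expnSr //.
rewrite big_distrl addnC /qdigit expn0 divn1 muln1; congr (_ + _)%N.
by apply: eq_bigr => i _; rewrite /bump /= add1n expnS divnMA mulnAC -mulnA mulnC.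
Qed.

Lemma qdigit_pair_expansion q n u s : (0 < q)%N -> (u < q ^ n)%N ->
  (u * q ^ s =
   \sum_(i < n) qdigit q u i * q ^ ((i + s) %% 2) * (q ^ 2) ^ ((i + s) %/ 2))%N.
Proof.
move=> q_gt0 lt_u; rewrite {1}(qdigit_expansion q_gt0 lt_u) big_distrl.
apply: eq_bigr => i _; rewrite /= -!mulnA -expnM -!expnD.
by rewrite [(_ + 2 * _)%N]addnC [(2 * _)%N]mulnC -divn_eq.
Qed.

Lemma wtq_split q n u : wtq q n u = (Eq q n u + Oq q n u)%N.
Proof. by rewrite /wtq (bigID (fun i : 'I_n => odd i)) addnC. Qed.

Lemma qdigit_pair_degree q n u s :
  (\sum_(i < n) qdigit q u i * q ^ ((i + s) %% 2))%N =
  (if odd s then Eq q n u * q + Oq q n u else Eq q n u + Oq q n u * q)%N.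
Proof.
rewrite (bigID (fun i : 'I_n => odd i)) /Oq /Eq !big_distrl /=.
by case odd_s: (odd s); rewrite [RHS]addnC; congr (_ + _)%N; apply: eq_bigr => i;
  rewrite modn2 oddD odd_s => odd_i; rewrite ?(negPf odd_i) ?odd_i ?muln1.
Qed.

Lemma pair_degree_lt q d E O :
    (E + O < 2 * d * (q - 1))%N || (E + O == 2 * d * (q - 1))%N && (E != O) ->
  (E + O * q < d * (q ^ 2).-1)%N || (E * q + O < d * (q ^ 2).-1)%N.
Proof.
move=> wt_cond.
have sum_degrees : (E + O * q + (E * q + O) = (E + O) * (q + 1))%N by ring.
have pred_sq : ((q ^ 2).-1 = (q - 1) * (q + 1))%N by rewrite -mulnn; nia.
have neq_degrees : (E != O) -> (E + O * q != E * q + O)%N.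
  by apply: contra => /eqP eq_deg; apply/eqP; nia.
case/orP: wt_cond => [lt_wt|/andP[/eqP eq_wt /neq_degrees]].
  have : ((E + O) * (q + 1) < 2 * d * (q - 1) * (q + 1))%N by rewrite ltn_pmul2r ?addn1.
  by rewrite -sum_degrees pred_sq; lia.
by move: sum_degrees; rewrite eq_wt pred_sq; lia.
Qed.

Lemma prim_root_expr_inj (R : idomainType) N (z : R) i j : N.-primitive_root z ->
  (0 < i <= N)%N -> (0 < j <= N)%N -> z ^+ i = z ^+ j -> i = j.
Proof.
move=> prim /andP[i_gt0 le_iN] /andP[j_gt0 le_jN] /eqP.
rewrite (eq_prim_root_expr prim) -(prednK i_gt0) -(prednK j_gt0) -[i.-1.+1]addn1.
rewrite -[j.-1.+1]addn1 eqn_modDr !modn_small => [/eqP||]; lia.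
Qed.

Lemma wtq0 q n : wtq q n 0 = 0%N.
Proof. by rewrite /wtq big1 // => i _; rewrite /qdigit div0n mod0n. Qed.

Lemma inZrI_wtq (L : finFieldType) q n m (alpha : L) r I u :
    (q ^ n - 1).-primitive_root alpha -> 0%N \in I -> (r < n * (q - 1))%N ->
    (0 < u <= q ^ n - 1)%N -> inZrI q n m alpha r I (alpha ^+ u) ->
  (wtq q n u < n * (q - 1) - r)%N
  || (wtq q n u == n * (q - 1) - r)%N && (Eq q n u != Oq q n u).
Proof.
move=> prim I0 lt_r range_u /orP[/existsP[u' /and4P[u'_gt0 le_u' wt_u' /eqP eq_u']]|].
  rewrite -(prim_root_expr_inj prim _ range_u eq_u') ?u'_gt0 //.
  by apply/orP; left; lia.
case/existsP => k /and3P[_ k_notin_I /existsP[u' /and4P[le_u' /eqP wt_u' /eqP OE_u']]].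
move/eqP=> eq_u'.
have u'_gt0 : (0 < u')%N.
  by rewrite lt0n; apply/eqP => u'0; move: wt_u'; rewrite u'0 wtq0; lia.
rewrite -(prim_root_expr_inj prim _ range_u eq_u') ?u'_gt0 // wt_u' eqxx ltnn /=.
by apply: contraNneq k_notin_I => eq_EO; rewrite -OE_u' eq_EO /absdiff subnn.
Qed.

Lemma sum_Fq2_subspace_expr_eq0 (L : finFieldType) q (beta : L) (V : {set L}) d n u :
    [pchar L].-nat q -> (q ^ 2).-1.-primitive_root beta ->
    Qsubspace (q ^ 2) V -> #|V| = ((q ^ 2) ^ d)%N -> (u < q ^ n)%N ->
    (Eq q n u + Oq q n u * q < d * (q ^ 2).-1)%N
    || (Eq q n u * q + Oq q n u < d * (q ^ 2).-1)%N ->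
  \sum_(g in V) g ^+ u = 0.
Proof.
move=> qcharL beta_prim subV cardV lt_u deg_lt.
have q_gt0 : (0 < q)%N by case/andP: qcharL.
have QcharL : [pchar L].-nat (q ^ 2)%N by rewrite pnatX qcharL.
have sum_shift_eq0 s :
    (\sum_(i < n) qdigit q u i * q ^ ((i + s) %% 2) < d * (q ^ 2).-1)%N ->
    \sum_(g in V) g ^+ (u * q ^ s)%N = 0.
  move=> lt_deg; rewrite (qdigit_pair_expansion s q_gt0 lt_u).
  exact: (sum_Qsubspace_expr_eq0 QcharL beta_prim
    (fun i : 'I_n => (i + s) %/ 2)%N subV cardV lt_deg).
case/orP: deg_lt => lt_deg.
  by have := sum_shift_eq0 0%N; rewrite expn0 muln1 qdigit_pair_degree; apply.
suff : (\sum_(g in V) g ^+ u) ^+ q = 0 by move/eqP; rewrite expf_eq0 q_gt0 => /eqP.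
have frob0 : 0 ^+ q = 0 :> L by rewrite expr0n gtn_eqF.
rewrite (big_morph (fun x => x ^+ q) (fun x y => exprDn_pchar x y qcharL) frob0).
under eq_bigr do rewrite -exprM.
by have := sum_shift_eq0 1%N; rewrite expn1 qdigit_pair_degree; apply.
Qed.

Lemma Fq2_subspace_Qsubspace (L : finFieldType) q (V : {set L}) :
  Fq2_subspace q V -> Qsubspace (q ^ 2) V.
Proof. by case=> V0 VD VZ; split=> // c v; rewrite inE => /eqP; exact: VZ. Qed.

Lemma sum_indicator_expr (L : finFieldType) (V : {set L}) (lambda : L) u : (0 < u)%N ->
  \sum_(g | g != 0) (if (g \in V) && (g != 0) then lambda else 0) * g ^+ u
  = lambda * \sum_(g in V) g ^+ u.
Proof.
move=> u_gt0; rewrite mulr_sumr big_mkcond [RHS]big_mkcond; apply: eq_bigr => g _.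
have [->|g_neq0] := eqVneq g 0; last by rewrite andbT; case: ifP; rewrite ?mul0r.
by rewrite andbF expr0n gtn_eqF //= mulr0; case: ifP.
Qed.

Theorem lemma5p4 (p l m rho' : nat) (L : finFieldType) (alpha : L)
    (I : pred nat) (V : {set L}) (lambda : L) :
  prime p -> (0 < l)%N -> (0 < m)%N ->
  #|L| = ((p ^ l) ^ (2 * m))%N ->
  ((p ^ l) ^ (2 * m) - 1).-primitive_root alpha ->
  (2 * rho' <= 2 * m - 1)%N ->
  {subset I <= Mr (p ^ l) m (2 * rho' * (p ^ l - 1))} ->
  0%N \in I ->
  Fq2_subspace (p ^ l) V ->
  #|V| = (((p ^ l) ^ 2) ^ (m - rho'))%N ->
  lambda ^+ (p ^ l) = lambda -> lambda != 0 ->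
  in_code (p ^ l) (2 * m) m alpha (2 * rho' * (p ^ l - 1)) I
    (fun g => if (g \in V) && (g != 0) then lambda else 0).
Proof.
move=> p_prime l_gt0 m_gt0 cardL alpha_prim le_rho _ I0 /Fq2_subspace_Qsubspace subV cardV
  lambda_q _.
set q := (p ^ l)%N in cardL alpha_prim subV cardV lambda_q *.
have q_gt1 : (1 < q)%N by rewrite -(expn0 p) ltn_exp2l ?prime_gt1.
have qcharL : [pchar L].-nat q.
  rewrite -expnM in cardL; have pcharL := card_finPcharP cardL p_prime.
  by rewrite pnatX (pnatE _ p_prime) pcharL.
have [beta beta_prim] : exists beta : L, (q ^ 2).-1.-primitive_root beta.
  have dvd_ord : ((q ^ 2).-1 %| q ^ (2 * m) - 1)%N.
    by rewrite expnM subn1 dvdn_pred_predX.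
  by exists (alpha ^+ ((q ^ (2 * m) - 1) %/ (q ^ 2).-1)); exact: dvdn_prim_root.
split=> [g _|u /andP[u_gt0 le_u] inZ_u].
  by case: ifP; rewrite ?expr0n ?gtn_eqF // ltnW.
have lt_r : (2 * rho' * (q - 1) < 2 * m * (q - 1))%N.
  by rewrite ltn_pmul2r ?subn_gt0 //; lia.
have := inZrI_wtq alpha_prim I0 lt_r _ inZ_u.
rewrite u_gt0 le_u wtq_split -mulnBl -mulnBr => /(_ isT) /pair_degree_lt deg_lt.
have lt_u : (u < q ^ (2 * m))%N.
  by move: le_u; rewrite subn1 -ltnS prednK // expn_gt0 ltnW.
rewrite sum_indicator_expr //.
by rewrite (sum_Fq2_subspace_expr_eq0 qcharL beta_prim subV cardV lt_u deg_lt) mulr0.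
Qed.
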